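(* If $\alpha\in(-1,1)^N$ (i.e. $|\alpha|_\infty<1$), then for each $n\in\mathbb{N}$ the single-valued fractal operator $\mathcal{F}^\alpha_{\Delta,B_n}:\mathcal{C}(I)\to\mathcal{C}(I)$, $f\mapsto f^\alpha_{\Delta,B_n(f)}$, is bounded below and not compact.
   Context: $I=[x_0,x_N]$, $\mathcal{C}(I)$ real continuous functions with sup norm, $\Delta=\{x_0<\dots<x_N\}$, $N\ge2$, $I_i=[x_{i-1},x_i]$, $L_i(x)=a_ix+b_i$ the affine map of $I$ onto $I_i$ with $L_i(x_0)=x_{i-1}$, $L_i(x_N)=x_i$; $|\alpha|_\infty=\max_i|\alpha_i|$. For $f,b\in\mathcal{C}(I)$ with $b(x_0)=f(x_0)$, $b(x_N)=f(x_N)$, $f^\alpha_{\Delta,b}$ is the unique $g\in\mathcal{C}(I)$ with $g(x)=f(x)+\alpha_i(g-b)(L_i^{-1}(x))$ for $x\in I_i$. $B_n$ is the Bernstein operator $B_nf(x)=\sum_{k=0}^n f\big(x_0+\tfrac kn(x_N-x_0)\big)\binom nk\frac{(x-x_0)^k(x_N-x)^{n-k}}{(x_N-x_0)^n}$. A linear operator $T$ is bounded below if there is $C>0$ with $\|Tf\|_\infty\ge C\|f\|_\infty$ for all $f$. *)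

From Stdlib Require Import Reals Lra.
Open Scope R_scope.

Definition inI (x : nat -> R) (N : nat) (t : R) : Prop := x 0%nat <= t <= x N.

Definition partition (x : nat -> R) (N : nat) : Prop :=
  (2 <= N)%nat /\ forall i, (i < N)%nat -> x i < x (S i).

Definition cont_on (x : nat -> R) (N : nat) (f : R -> R) : Prop :=
  forall t, inI x N t -> limit1_in f (inI x N) (f t) t.

Definition is_supnorm (x : nat -> R) (N : nat) (f : R -> R) (s : R) : Prop :=
  is_lub (fun y => exists t, inI x N t /\ y = Rabs (f t)) s.

Definition L (x : nat -> R) (N i : nat) (t : R) : R :=
  x (pred i) + (x i - x (pred i)) / (x N - x 0%nat) * (t - x 0%nat).

Definition Linv (x : nat -> R) (N i : nat) (t : R) : R :=
  x 0%nat + (x N - x 0%nat) / (x i - x (pred i)) * (t - x (pred i)).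

Definition is_fractal (x : nat -> R) (N : nat) (alpha : nat -> R)
  (f b g : R -> R) : Prop :=
  cont_on x N g /\
  forall i t, (1 <= i <= N)%nat -> x (pred i) <= t <= x i ->
    g t = f t + alpha i * (g (Linv x N i t) - b (Linv x N i t)).

Definition Bern (x : nat -> R) (N n : nat) (f : R -> R) (t : R) : R :=
  sum_f_R0 (fun k =>
    f (x 0%nat + INR k / INR n * (x N - x 0%nat)) * C n k *
    ((t - x 0%nat) ^ k * (x N - t) ^ (n - k)) / (x N - x 0%nat) ^ n) n.

Definition bounded_below (x : nat -> R) (N : nat) (T : (R -> R) -> (R -> R)) : Prop :=
  exists c, 0 < c /\
    forall f s t, cont_on x N f -> is_supnorm x N f s -> is_supnorm x N (T f) t ->
      c * s <= t.

Definition compact_op (x : nat -> R) (N : nat) (T : (R -> R) -> (R -> R)) : Prop :=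
  forall (fs : nat -> R -> R) (M : R),
    (forall k, cont_on x N (fs k)) ->
    (forall k t, inI x N t -> Rabs (fs k t) <= M) ->
    exists (phi : nat -> nat) (g : R -> R),
      (forall k, (phi k < phi (S k))%nat) /\ cont_on x N g /\
      forall eps, 0 < eps -> exists K, forall k, (K <= k)%nat ->
        forall t, inI x N t -> Rabs (T (fs (phi k)) t - g t) < eps.

(* Let a < 1 bound every |alpha_i|.  On the piece I_i the fractal function
   g = T f satisfies f(t) = g(t) - alpha_i (g - B_n f)(L_i^{-1} t), and
   L_i^{-1} t lies again in I.  Since the Bernstein operator is a positive
   linear operator reproducing constants, |B_n f| <= |f|_oo on I, so
       |f(t)| <= |g|_oo + a (|g|_oo + |f|_oo)      for every t in I,
   i.e. (1 - a)/2 |f|_oo <= |T f|_oo: T is bounded below.  The fractal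
   equation is linear in (f, b, g), so the same estimate applies to the
   difference of two fractal functions.  Applied to a sequence of tent
   functions with height 1 whose peaks lie outside the supports of all later
   tents, it shows that the images T f_k stay (1 - a)/2 apart in sup norm,
   so no subsequence converges uniformly: T is not compact. *)

From Stdlib Require Import Reals Lra Lia Psatz.
Open Scope R_scope.

Lemma contraction_gap a s G :
  0 <= a < 1 -> 0 <= G -> s <= G + a * (G + s) -> (1 - a) / 2 * s <= G.
Proof. intros Ha HG Hs. nra. Qed.

Lemma uniform_contraction (alpha : nat -> R) N :
  (forall i, (1 <= i <= N)%nat -> Rabs (alpha i) < 1) ->
  exists a, 0 <= a < 1 /\ forall i, (1 <= i <= N)%nat -> Rabs (alpha i) <= a.
Proof.
  induction N as [|N IH]; intros Halpha.
  - exists 0; split; [lra | intros; lia].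
  - destruct IH as [a [Ha Hbound]]; [intros; apply Halpha; lia|].
    exists (Rmax a (Rabs (alpha (S N)))); split.
    + split; [apply Rle_trans with a; [lra | apply Rmax_l]|].
      apply Rmax_lub_lt; [lra | apply Halpha; lia].
    + intros i Hi; destruct (Nat.eq_dec i (S N)) as [->|Hne]; [apply Rmax_r|].
      apply Rle_trans with a; [apply Hbound; lia | apply Rmax_l].
Qed.

Lemma supnorm_bound x N f s t :
  is_supnorm x N f s -> inI x N t -> Rabs (f t) <= s.
Proof. intros [Hub _] Ht; apply Hub; eauto. Qed.

Lemma supnorm_least x N f s B :
  is_supnorm x N f s -> (forall t, inI x N t -> Rabs (f t) <= B) -> s <= B.
Proof. intros [_ Hleast] HB; apply Hleast; intros y [t [Ht ->]]; auto. Qed.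

Section Partition.

Variables (x : nat -> R) (N : nat).
Hypothesis HP : partition x N.

Lemma node_ge_left m : (m <= N)%nat -> x 0%nat <= x m.
Proof.
  destruct HP as [_ Hinc]; induction m as [|m IH]; intros Hm; [lra|].
  specialize (Hinc m ltac:(lia)); specialize (IH ltac:(lia)); lra.
Qed.

Lemma piece_lt i : (1 <= i <= N)%nat -> x (pred i) < x i.
Proof.
  destruct HP as [_ Hinc]; intros Hi.
  specialize (Hinc (pred i) ltac:(lia)); replace (S (pred i)) with i in Hinc by lia; auto.
Qed.

Lemma length_pos : 0 < x N - x 0%nat.
Proof.
  destruct HP as [HN _].
  pose proof (node_ge_left (pred N) ltac:(lia)).
  pose proof (piece_lt N ltac:(lia)); lra.
Qed.

Lemma left_end_in : inI x N (x 0%nat).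
Proof. pose proof length_pos; unfold inI; lra. Qed.

Lemma bernstein_node_in n k : (1 <= n)%nat -> (k <= n)%nat ->
  inI x N (x 0%nat + INR k / INR n * (x N - x 0%nat)).
Proof.
  intros Hn Hk; pose proof length_pos.
  assert (0 < INR n) by (apply lt_0_INR; lia).
  assert (INR k <= INR n) by (apply le_INR; auto).
  pose proof (pos_INR k).
  assert (0 <= INR k / INR n <= 1).
  { split; [apply Rle_mult_inv_pos; lra|].
    apply (Rmult_le_reg_r (INR n)); [lra|]; field_simplify; lra. }
  unfold inI; split; nra.
Qed.

Lemma piece_of t : inI x N t ->
  exists i, (1 <= i <= N)%nat /\ x (pred i) <= t <= x i.
Proof.
  intros [Ht0 HtN].
  assert (Hup : forall m, (1 <= m <= N)%nat -> t <= x m ->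
            exists i, (1 <= i <= m)%nat /\ x (pred i) <= t <= x i).
  { induction m as [|m IH]; intros Hm Htm; [lia|].
    destruct m as [|m]; [exists 1%nat; simpl; split; [lia | lra]|].
    destruct (Rle_dec t (x (S m))) as [Hle|Hgt].
    - destruct (IH ltac:(lia) Hle) as [i [Hi Hti]]; exists i; split; [lia | auto].
    - exists (S (S m)); simpl; split; [lia | lra]. }
  destruct HP as [HN _].
  destruct (Hup N ltac:(lia) HtN) as [i [Hi Hti]]; exists i; split; [lia | auto].
Qed.

Lemma Linv_in i t : (1 <= i <= N)%nat -> x (pred i) <= t <= x i ->
  inI x N (Linv x N i t).
Proof.
  intros Hi Ht; pose proof length_pos; pose proof (piece_lt i Hi).
  set (rho := (t - x (pred i)) / (x i - x (pred i))).
  assert (Hrho : 0 <= rho <= 1).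
  { unfold rho; split; [apply Rle_mult_inv_pos; lra|].
    apply (Rmult_le_reg_r (x i - x (pred i))); [lra|]; field_simplify; lra. }
  unfold inI, Linv.
  replace ((x N - x 0%nat) / (x i - x (pred i)) * (t - x (pred i)))
    with ((x N - x 0%nat) * rho) by (unfold rho; field; lra).
  split; nra.
Qed.

End Partition.

Lemma Bern_sub x N n f g t :
  Bern x N n f t - Bern x N n g t = Bern x N n (fun w => f w - g w) t.
Proof. unfold Bern; rewrite <- minus_sum; apply sum_eq; intros; unfold Rdiv; ring. Qed.

Lemma binomial_coef_nonneg n k : 0 <= C n k.
Proof.
  unfold C, Rdiv; apply Rmult_le_pos; [apply pos_INR|].
  apply Rlt_le, Rinv_0_lt_compat, Rmult_lt_0_compat;
    apply lt_0_INR, Factorial.lt_O_fact.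
Qed.

(* ... and, being a positive operator reproducing constants, it does not
   increase the sup norm on I. *)
Lemma Bern_bound x N n f M t : partition x N -> (1 <= n)%nat ->
  (forall w, inI x N w -> Rabs (f w) <= M) -> inI x N t ->
  Rabs (Bern x N n f t) <= M.
Proof.
  intros HP Hn Hf [Ht0 HtN]; pose proof (length_pos x N HP).
  set (W := fun k => C n k * ((t - x 0%nat) ^ k * (x N - t) ^ (n - k))
                      / (x N - x 0%nat) ^ n).
  assert (HW : forall k, 0 <= W k).
  { intros k; unfold W, Rdiv.
    apply Rmult_le_pos; [apply Rmult_le_pos; [apply binomial_coef_nonneg|]|].
    - apply Rmult_le_pos; apply pow_le; lra.
    - apply Rlt_le, Rinv_0_lt_compat, pow_lt; lra. }
  assert (Hunity : sum_f_R0 W n = 1).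
  { unfold W; rewrite <- (sum_eq (fun k => C n k * (t - x 0%nat) ^ k * (x N - t) ^ (n - k)
                                            * / (x N - x 0%nat) ^ n))
      by (intros; unfold Rdiv; ring).
    rewrite <- scal_sum, <- binomial.
    replace (t - x 0%nat + (x N - t)) with (x N - x 0%nat) by ring.
    rewrite Rmult_comm, Rinv_r; [lra | apply pow_nonzero; lra]. }
  unfold Bern; eapply Rle_trans; [apply sum_f_R0_triangle|].
  apply Rle_trans with (sum_f_R0 (fun k => W k * M) n).
  - apply sum_Rle; intros k Hk.
    replace (f (x 0%nat + INR k / INR n * (x N - x 0%nat)) * C n k *
               ((t - x 0%nat) ^ k * (x N - t) ^ (n - k)) / (x N - x 0%nat) ^ n)
      with (f (x 0%nat + INR k / INR n * (x N - x 0%nat)) * W k)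
      by (unfold W, Rdiv; ring).
    rewrite Rabs_mult, (Rabs_pos_eq (W k) (HW k)), Rmult_comm.
    apply Rmult_le_compat_l; [auto|]; apply Hf, bernstein_node_in; auto.
  - rewrite <- scal_sum, Hunity; lra.
Qed.

Definition fractal_eq (x : nat -> R) (N : nat) (alpha : nat -> R) (f b g : R -> R) : Prop :=
  forall i t, (1 <= i <= N)%nat -> x (pred i) <= t <= x i ->
    g t = f t + alpha i * (g (Linv x N i t) - b (Linv x N i t)).

Lemma fractal_eq_of_is_fractal x N alpha f b g :
  is_fractal x N alpha f b g -> fractal_eq x N alpha f b g.
Proof. intros [_ E]; exact E. Qed.

Lemma fractal_eq_sub x N alpha f1 b1 g1 f2 b2 g2 :
  fractal_eq x N alpha f1 b1 g1 -> fractal_eq x N alpha f2 b2 g2 ->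
  fractal_eq x N alpha (fun t => f1 t - f2 t) (fun t => b1 t - b2 t)
    (fun t => g1 t - g2 t).
Proof. intros E1 E2 i t Hi Ht; rewrite (E1 i t Hi Ht), (E2 i t Hi Ht); ring. Qed.

Lemma fractal_eq_estimate x N alpha a f b g G S t :
  partition x N -> (forall i, (1 <= i <= N)%nat -> Rabs (alpha i) <= a) ->
  fractal_eq x N alpha f b g ->
  (forall w, inI x N w -> Rabs (g w) <= G) ->
  (forall w, inI x N w -> Rabs (b w) <= S) ->
  inI x N t -> Rabs (f t) <= G + a * (G + S).
Proof.
  intros HP Ha E Hg Hb Ht.
  destruct (piece_of x N HP t Ht) as [i [Hi Hti]].
  pose proof (E i t Hi Hti) as Eq.
  assert (Hv : inI x N (Linv x N i t)) by exact (Linv_in x N HP i t Hi Hti).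
  set (v := Linv x N i t) in *.
  assert (Hf : f t = g t - alpha i * (g v - b v)) by (rewrite Eq; ring).
  assert (Hgb : Rabs (g v - b v) <= G + S).
  { unfold Rminus; eapply Rle_trans; [apply Rabs_triang|].
    rewrite Rabs_Ropp; apply Rplus_le_compat; auto. }
  rewrite Hf; unfold Rminus at 1; eapply Rle_trans; [apply Rabs_triang|].
  rewrite Rabs_Ropp, Rabs_mult; apply Rplus_le_compat; [auto|].
  apply Rmult_le_compat; auto using Rabs_pos.
Qed.

Lemma fractal_operator_bounded_below x N alpha a n T :
  partition x N -> 0 <= a < 1 ->
  (forall i, (1 <= i <= N)%nat -> Rabs (alpha i) <= a) -> (1 <= n)%nat ->
  (forall f, cont_on x N f -> is_fractal x N alpha f (Bern x N n f) (T f)) ->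
  bounded_below x N T.
Proof.
  intros HP Ha Halpha Hn HT; exists ((1 - a) / 2); split; [lra|].
  intros f s G Hf Hs HG.
  assert (HG0 : 0 <= G).
  { eapply Rle_trans; [apply Rabs_pos | exact (supnorm_bound _ _ _ _ _ HG (left_end_in x N HP))]. }
  apply contraction_gap; auto.
  apply (supnorm_least x N f s _ Hs); intros t Ht.
  apply (fractal_eq_estimate x N alpha a f (Bern x N n f) (T f)); auto.
  - apply fractal_eq_of_is_fractal; auto.
  - intros w Hw; exact (supnorm_bound _ _ _ _ _ HG Hw).
  - intros w Hw; apply Bern_bound; auto; intros; eapply supnorm_bound; eauto.
Qed.

Lemma separated_images_not_compact x N (T : (R -> R) -> (R -> R)) fs M c :
  0 < c ->
  (forall k, cont_on x N (fs k)) ->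
  (forall k t, inI x N t -> Rabs (fs k t) <= M) ->
  (forall p q G, (p < q)%nat ->
     (forall t, inI x N t -> Rabs (T (fs p) t - T (fs q) t) <= G) -> c <= G) ->
  ~ compact_op x N T.
Proof.
  intros Hc Hcont Hbound Hsep Hcompact.
  destruct (Hcompact fs M Hcont Hbound) as [phi [g [Hphi [_ Hconv]]]].
  destruct (Hconv (c / 4) ltac:(lra)) as [K HK].
  enough (c <= c / 2) by lra.
  apply (Hsep (phi K) (phi (S K))); [apply Hphi|].
  intros t Ht.
  pose proof (HK K (le_n K) t Ht); pose proof (HK (S K) (le_S _ _ (le_n K)) t Ht).
  split_Rabs; lra.
Qed.

Definition tent (c r u : R) : R := Rmax 0 (1 - Rabs (u - c) / r).

Lemma tent_range c r u : 0 < r -> 0 <= tent c r u <= 1.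
Proof.
  intros Hr; unfold tent; split; [apply Rmax_l|].
  apply Rmax_lub; [lra|]; pose proof (Rabs_pos (u - c)).
  assert (0 <= Rabs (u - c) / r) by (apply Rle_mult_inv_pos; lra); lra.
Qed.

Lemma tent_peak c r : 0 < r -> tent c r c = 1.
Proof.
  intros Hr; unfold tent; rewrite Rminus_diag, Rabs_R0.
  unfold Rdiv; rewrite Rmult_0_l, Rminus_0_r; apply Rmax_right; lra.
Qed.

Lemma tent_outside c r u : 0 < r -> r <= Rabs (u - c) -> tent c r u = 0.
Proof.
  intros Hr Hu; unfold tent; apply Rmax_left.
  assert (1 <= Rabs (u - c) / r).
  { apply (Rmult_le_reg_r r); [lra|]; field_simplify; lra. }
  lra.
Qed.

Lemma tent_lipschitz c r u t : 0 < r ->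
  Rabs (tent c r u - tent c r t) <= Rabs (u - t) / r.
Proof.
  intros Hr; unfold tent.
  assert (Hmax : forall A B, Rabs (Rmax 0 A - Rmax 0 B) <= Rabs (A - B)).
  { intros A B; unfold Rmax; destruct (Rle_dec 0 A), (Rle_dec 0 B); split_Rabs; lra. }
  eapply Rle_trans; [apply Hmax|].
  replace (1 - Rabs (u - c) / r - (1 - Rabs (t - c) / r))
    with ((Rabs (t - c) - Rabs (u - c)) / r) by (field; lra).
  apply (Rmult_le_reg_r r); [lra|].
  unfold Rdiv; rewrite Rabs_mult, (Rabs_pos_eq (/ r)), !Rmult_assoc, Rinv_l, !Rmult_1_r
    by (try apply Rlt_le, Rinv_0_lt_compat; lra).
  eapply Rle_trans; [apply Rabs_triang_inv2|].
  replace (t - c - (u - c)) with (- (u - t)) by ring; rewrite Rabs_Ropp; lra.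
Qed.

Lemma lipschitz_cont x N f K : 0 < K ->
  (forall u t, Rabs (f u - f t) <= Rabs (u - t) / K) -> cont_on x N f.
Proof.
  intros HK Hf t _ eps Heps; exists (eps * K); split; [nra|].
  intros u [_ Hu]; simpl in *; unfold R_dist in *.
  eapply Rle_lt_trans; [apply Hf|].
  apply (Rmult_lt_reg_r K); [lra|]; unfold Rdiv; rewrite Rmult_assoc, Rinv_l by lra; lra.
Qed.

Section Tents.

Variables (x : nat -> R) (N : nat).
Hypothesis HP : partition x N.

(* The k-th tent lives on [x_0 + L/(k+2), x_0 + L/(k+1)], L = x_N - x_0:
   these intervals have disjoint interiors and accumulate at x_0. *)
Definition tent_center (k : nat) : R :=
  x 0%nat + (x N - x 0%nat) * (/ (INR k + 2) + / (INR k + 1)) / 2.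
Definition tent_radius (k : nat) : R :=
  (x N - x 0%nat) * (/ (INR k + 1) - / (INR k + 2)) / 2.
Definition bump (k : nat) : R -> R := tent (tent_center k) (tent_radius k).

Lemma inv_shift_bounds k : 0 < / (INR k + 2) < / (INR k + 1) /\ / (INR k + 1) <= 1.
Proof.
  pose proof (pos_INR k); split; [split|].
  - apply Rinv_0_lt_compat; lra.
  - apply Rinv_lt_contravar; nra.
  - rewrite <- Rinv_1; apply Rinv_le_contravar; lra.
Qed.

Lemma tent_radius_pos k : 0 < tent_radius k.
Proof. pose proof (length_pos x N HP); pose proof (inv_shift_bounds k); unfold tent_radius; nra. Qed.

Lemma tent_center_in k : inI x N (tent_center k).
Proof.
  pose proof (length_pos x N HP); pose proof (inv_shift_bounds k).
  unfold inI, tent_center; split; nra.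
Qed.

Lemma bump_cont k : cont_on x N (bump k).
Proof.
  apply (lipschitz_cont x N _ (tent_radius k)); [apply tent_radius_pos|].
  intros u t; apply tent_lipschitz, tent_radius_pos.
Qed.

Lemma bump_range k w : 0 <= bump k w <= 1.
Proof. apply tent_range, tent_radius_pos. Qed.

Lemma bump_peak k : bump k (tent_center k) = 1.
Proof. apply tent_peak, tent_radius_pos. Qed.

Lemma bump_vanishes_at_earlier_peak p q : (p < q)%nat -> bump q (tent_center p) = 0.
Proof.
  intros Hpq; apply tent_outside; [apply tent_radius_pos|].
  pose proof (length_pos x N HP); pose proof (inv_shift_bounds p); pose proof (inv_shift_bounds q).
  assert (INR p + 2 <= INR q + 1).
  { assert (INR (S p) <= INR q) by (apply le_INR; lia); rewrite S_INR in *; lra. }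
  assert (/ (INR q + 1) <= / (INR p + 2)).
  { pose proof (pos_INR p); apply Rinv_le_contravar; lra. }
  unfold tent_radius, tent_center; rewrite Rabs_pos_eq; nra.
Qed.

End Tents.

(* Second half: the images of the tents under T are (1 - a)/2-separated. *)
Lemma fractal_operator_not_compact x N alpha a n T :
  partition x N -> 0 <= a < 1 ->
  (forall i, (1 <= i <= N)%nat -> Rabs (alpha i) <= a) -> (1 <= n)%nat ->
  (forall f, cont_on x N f -> is_fractal x N alpha f (Bern x N n f) (T f)) ->
  ~ compact_op x N T.
Proof.
  intros HP Ha Halpha Hn HT.
  pose proof (bump_cont x N HP) as Hcont; pose proof (bump_range x N HP) as Hrange.
  apply (separated_images_not_compact x N T (bump x N) 1 ((1 - a) / 2)); [lra | auto | |].
  - intros k t _; destruct (Hrange k t); rewrite Rabs_pos_eq; lra.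
  - intros p q G Hpq HG.
    assert (HG0 : 0 <= G) by (eapply Rle_trans; [apply Rabs_pos | apply HG, left_end_in; auto]).
    replace ((1 - a) / 2) with ((1 - a) / 2 * 1) by ring.
    apply contraction_gap; auto.
    assert (Hpeak : bump x N p (tent_center x N p) - bump x N q (tent_center x N p) = 1).
    { rewrite bump_peak, bump_vanishes_at_earlier_peak; auto; lra. }
    assert (Hest : Rabs (bump x N p (tent_center x N p) - bump x N q (tent_center x N p))
                   <= G + a * (G + 1)).
    { apply (fractal_eq_estimate x N alpha a
               (fun t => bump x N p t - bump x N q t)
               (fun t => Bern x N n (bump x N p) t - Bern x N n (bump x N q) t)
               (fun t => T (bump x N p) t - T (bump x N q) t)); auto.
      - apply fractal_eq_sub; apply fractal_eq_of_is_fractal, HT, Hcont.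
      - intros w Hw; rewrite Bern_sub; apply Bern_bound; auto.
        intros v _; destruct (Hrange p v), (Hrange q v); split_Rabs; lra.
      - apply tent_center_in; auto. }
    rewrite Hpeak, Rabs_R1 in Hest; exact Hest.
Qed.

Theorem mainTheorem15 (x : nat -> R) (N : nat) (alpha : nat -> R) (n : nat)
  (T : (R -> R) -> (R -> R)) :
  partition x N ->
  (forall i, (1 <= i <= N)%nat -> Rabs (alpha i) < 1) ->
  (1 <= n)%nat ->
  (forall f, cont_on x N f -> is_fractal x N alpha f (Bern x N n f) (T f)) ->
  bounded_below x N T /\ ~ compact_op x N T.
Proof.
  intros HP Halpha Hn HT.
  destruct (uniform_contraction alpha N Halpha) as [a [Ha Hbound]].
  split.
  - exact (fractal_operator_bounded_below x N alpha a n T HP Ha Hbound Hn HT).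
  - exact (fractal_operator_not_compact x N alpha a n T HP Ha Hbound Hn HT).
Qed.
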